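(* Let $f:\mathbb{R}^n\times\mathbb{R}^m\to\mathbb{R}^n$ be a polynomial map and let $\boldsymbol\psi:\mathbb{R}^n\to\mathbb{R}^m$ be a function whose graph satisfies \[ \{(x,\boldsymbol\psi(x)) : x\in\mathbb{R}^n\} = \{(x,u) \mid \exists\,\lambda\in\mathbb{R}^{n_\lambda}\ \text{s.t.}\ g(x,u,\lambda)\ge 0,\ h(x,u,\lambda)=0\} \] for vector-valued polynomial maps $g,h$. Write $\xi=(x,u,\lambda,x^+,u^+,\lambda^+)$. Suppose there exist a polynomial $V(x,u,\lambda)$, (vectors of) sum-of-squares polynomials $\sigma_0(\xi),\sigma_1(\xi),\sigma_2(\xi),\bar\sigma_0(x,u,\lambda),\bar\sigma_1(x,u,\lambda)$ and (vectors of) arbitrary polynomials $p_1(\xi),p_2(\xi),p_3(\xi),\bar p_1(x,u,\lambda)$ of compatible dimensions such that the polynomial identities \[ V(x,u,\lambda) - V(x^+,u^+,\lambda^+) - \|x\|_2^2 = \sigma_0(\xi) + \sigma_1(\xi)^\top g(x,u,\lambda) + \sigma_2(\xi)^\top g(x^+,u^+,\lambda^+) + p_1(\xi)^\top h(x,u,\lambda) + p_2(\xi)^\top h(x^+,u^+,\lambda^+) + p_3(\xi)^\top(x^+ - f(x,u)), \] \[ V(x,u,\lambda) = \bar\sigma_0(x,u,\lambda) + \bar\sigma_1(x,u,\lambda)^\top g(x,u,\lambda) + \bar p_1(x,u,\lambda)^\top h(x,u,\lambda) \] hold. Then: (1) the closed-loop system $x_{k+1}=f(x_k,\boldsymbol\psi(x_k))$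 is globally attractive, i.e., $x_k\to0$ for all initial conditions; (2) if in addition the function $x\mapsto\inf\{\|u\|_2+\|\lambda\|_2\mid g(x,u,\lambda)\ge0,\ h(x,u,\lambda)=0\}$ is bounded on some neighborhood of the origin, or $V$ does not depend on $(u,\lambda)$, then the closed-loop system is globally asymptotically stable.
   Context: A polynomial is sum-of-squares (SOS) if it is a finite sum of squares of polynomials; a vector of SOS polynomials has SOS entries. The closed-loop system is globally asymptotically stable if (i) for all initial conditions $x_0$, $\lim_{k\to\infty}x_k=0$, and (ii) for every $\epsilon>0$ there exists $\delta>0$ such that $\|x_0\|_2\le\delta$ implies $\|x_k\|_2\le\epsilon$ for all $k$. *)

From HB Require Import structures.
From Stdlib Require Lists.List.
From mathcomp Require Import all_boot all_order all_algebra.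
From mathcomp Require Import all_classical all_reals all_analysis.
Set Implicit Arguments. Unset Strict Implicit. Unset Printing Implicit Defensive.
Import Order.TTheory GRing.Theory Num.Theory.
Import numFieldNormedType.Exports.
Local Open Scope classical_set_scope.
Local Open Scope ring_scope.

(* Polynomial functions in real variables indexed by a type I:
   points are valuations I -> R; polynomials are generated by constants,
   coordinate variables, sums and products. Over an infinite field, a
   polynomial identity is the same as equality of the associated functions. *)
Inductive polyfun {R : pzRingType} {I : Type} : ((I -> R) -> R) -> Prop :=
| pf_const (c : R) : polyfun (fun _ => c)
| pf_var (i : I) : polyfun (fun z => z i)
| pf_add p q : polyfun p -> polyfun q -> polyfun (fun z => p z + q z)
| pf_mul p q : polyfun p -> polyfun q -> polyfun (fun z => p z * q z).

Definition sos {R : pzRingType} {I : Type} (p : (I -> R) -> R) : Prop :=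
  exists s : seq ((I -> R) -> R),
    (forall q, Stdlib.Lists.List.In q s -> polyfun q) /\
    (forall z, p z = \sum_(q <- s) (q z) ^+ 2).

Definition xu_var (n m : nat) := ('I_n + 'I_m)%type.
Definition xul_var (n m l : nat) := ('I_n + 'I_m + 'I_l)%type.
Definition xi_var (n m l : nat) := (xul_var n m l + xul_var n m l)%type.

Definition pt_xu {R : Type} {n m : nat} (x : 'I_n -> R) (u : 'I_m -> R)
  : xu_var n m -> R :=
  fun v => match v with inl i => x i | inr j => u j end.

Definition pt_xul {R : Type} {n m l : nat} (x : 'I_n -> R) (u : 'I_m -> R)
  (lam : 'I_l -> R) : xul_var n m l -> R :=
  fun v => match v with
           | inl (inl i) => x i | inl (inr j) => u j | inr k => lam k end.

Definition pt_xi {R : Type} {n m l : nat} (a b : xul_var n m l -> R)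
  : xi_var n m l -> R :=
  fun v => match v with inl w => a w | inr w => b w end.

Definition sqnorm2 {R : pzRingType} {n : nat} (x : 'I_n -> R) : R :=
  \sum_(i < n) x i ^+ 2.
Definition norm2 {R : rcfType} {n : nat} (x : 'I_n -> R) : R :=
  Num.sqrt (sqnorm2 x).

Fixpoint traj {R : Type} {n m : nat} (f : 'I_n -> (xu_var n m -> R) -> R)
  (psi : ('I_n -> R) -> ('I_m -> R)) (x0 : 'I_n -> R) (k : nat) : 'I_n -> R :=
  match k with
  | 0 => x0
  | k'.+1 => let xk := traj f psi x0 k' in fun i => f i (pt_xu xk (psi xk))
  end.

Definition glob_attractive {R : realType} {n m : nat}
  (f : 'I_n -> (xu_var n m -> R) -> R) (psi : ('I_n -> R) -> ('I_m -> R)) : Prop :=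
  forall x0 : 'I_n -> R, norm2 (traj f psi x0 k) @[k --> \oo] --> (0 : R).

Definition GAS {R : realType} {n m : nat}
  (f : 'I_n -> (xu_var n m -> R) -> R) (psi : ('I_n -> R) -> ('I_m -> R)) : Prop :=
  glob_attractive f psi /\
  (forall eps : R, 0 < eps -> exists delta : R, 0 < delta /\
     forall x0 : 'I_n -> R, norm2 x0 <= delta ->
       forall k, norm2 (traj f psi x0 k) <= eps).

From HB Require Import structures.
From mathcomp Require Import all_boot all_order all_algebra.
From mathcomp Require Import all_classical all_reals all_analysis.
From mathcomp Require Import ring lra.
Import Order.TTheory GRing.Theory Num.Theory.
Import numFieldNormedType.Exports.
Local Open Scope ring_scope.
Local Open Scope classical_set_scope.

Set Implicit Arguments.
Unset Strict Implicit.
Unset Printing Implicit Defensive.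

(* On the feasible set {g >= 0, h = 0}, whose projection is the graph of psi, every
   multiplier term of the two certificates vanishes or has the right sign. Hence V >= 0
   there, and V drops by at least |x|^2 along the closed loop whatever feasible
   multipliers are chosen; the drops of a nonincreasing nonnegative sequence tend to 0,
   so x_k -> 0. For stability let c0 be the value of V at a feasible point over the
   origin. If near the origin V has values between c0 - K (|x| + |f(x)|) and c0 + K |x|,
   the lower estimate taken far along trajectories shows that c0 bounds every value from
   below, and the upper one then gives |x_k|^2 <= K |x_0|. When V depends on x only, both
   estimates come from V being locally Lipschitz; when the multipliers are bounded near 0
   they come from the dissipation identity between x and the point over the origin, whose
   p3-term is bounded on a box (which also forces f(0, psi 0) = 0). *)

Lemma sos_ge0 (R : realType) (I : Type) (p : (I -> R) -> R) z : sos p -> 0 <= p z.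
Proof. by case=> s [_ ->]; apply: sumr_ge0 => q _; apply: sqr_ge0. Qed.

Section Norm2.
Variables (R : realType) (n : nat).
Implicit Types x : 'I_n -> R.

Lemma sqnorm2_ge0 x : 0 <= sqnorm2 x.
Proof. by apply: sumr_ge0 => i _; apply: sqr_ge0. Qed.

Lemma norm2_ge0 x : 0 <= norm2 x :> R.
Proof. exact: sqrtr_ge0. Qed.

Lemma sqnorm2_0 : sqnorm2 (0 : 'I_n -> R) = 0.
Proof. by rewrite /sqnorm2 big1 // => i _; rewrite expr0n. Qed.

Lemma norm2_0 : norm2 (0 : 'I_n -> R) = 0.
Proof. by rewrite /norm2 sqnorm2_0 sqrtr0. Qed.

Lemma sqr_coord_le_sqnorm2 x i : x i ^+ 2 <= sqnorm2 x.
Proof.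
by rewrite /sqnorm2 (bigD1 i) //= lerDl; apply: sumr_ge0 => j _; apply: sqr_ge0.
Qed.

Lemma coord_le_norm2 x i : `|x i| <= norm2 x :> R.
Proof. by rewrite -sqrtr_sqr ler_sqrt ?sqr_coord_le_sqnorm2 ?sqnorm2_ge0. Qed.

Lemma sqnorm2_le0 x : sqnorm2 x <= 0 -> x = 0.
Proof.
move=> x_le0; apply/funext => i; apply/eqP; rewrite -sqrf_eq0 eq_le sqr_ge0 andbT.
exact: le_trans (sqr_coord_le_sqnorm2 x i) x_le0.
Qed.

Lemma norm2_le_sqr x e : 0 <= e -> sqnorm2 x <= e ^+ 2 -> norm2 x <= e.
Proof.
by move=> e_ge0 x_le; rewrite -[leRHS](ger0_norm e_ge0) -sqrtr_sqr ler_sqrt ?sqr_ge0.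
Qed.

Lemma norm2_opp x : norm2 (fun i => - x i) = norm2 x.
Proof. by rewrite /norm2 /sqnorm2; under eq_bigr do rewrite sqrrN. Qed.

Lemma norm_sum_mul_le (a K : 'I_n -> R) x : (forall i, `|a i| <= K i) ->
  `|\sum_i a i * x i| <= (\sum_i K i) * norm2 x.
Proof.
move=> aK; apply: le_trans (ler_norm_sum _ _ _) _; rewrite mulr_suml.
apply: ler_sum => i _; rewrite normrM.
by apply: ler_pM; rewrite ?normr_ge0 ?aK ?coord_le_norm2.
Qed.

End Norm2.

Section PolyfunBox.
Variables (R : realType) (I : Type) (B : R).
Hypothesis B_ge0 : 0 <= B.

Definition in_box (z : I -> R) := forall v, `|z v| <= B.

Definition box_lipschitz (p : (I -> R) -> R) (C : R) :=
  forall z w d, in_box z -> in_box w -> (forall v, `|z v - w v| <= d) ->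
    `|p z - p w| <= C * d.

Lemma box_lipschitz_bounded p C : box_lipschitz p C ->
  forall z, in_box z -> `|p z| <= `|p (fun _ => 0)| + C * B.
Proof.
move=> pC z zB.
have zero_in_box : in_box (fun _ => 0) by move=> v; rewrite normr0.
have z_close : forall v, `|z v - 0| <= B by move=> v; rewrite subr0.
have := pC _ _ _ zB zero_in_box z_close.
have := ler_normD (p z - p (fun _ => 0)) (p (fun _ => 0)); rewrite subrK; lra.
Qed.

Lemma polyfun_box_lipschitz p : polyfun p -> exists2 C, 0 <= C & box_lipschitz p C.
Proof.
elim=> {p} [c | i | p q _ [Cp Cp_ge0 pC] _ [Cq Cq_ge0 qC]
              | p q _ [Cp Cp_ge0 pC] _ [Cq Cq_ge0 qC]].
- by exists 0 => // z w d _ _ _; rewrite subrr normr0 mul0r.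
- by exists 1 => // z w d _ _ /(_ i); rewrite mul1r.
- exists (Cp + Cq) => [|z w d zB wB zw]; first exact: addr_ge0.
  rewrite (_ : _ - _ = (p z - p w) + (q z - q w)); last by ring.
  by apply: le_trans (ler_normD _ _) _; rewrite mulrDl lerD ?pC ?qC.
- pose Kp := `|p (fun _ => 0)| + Cp * B; pose Kq := `|q (fun _ => 0)| + Cq * B.
  have Kp_ge0 : 0 <= Kp by rewrite addr_ge0 ?mulr_ge0.
  have Kq_ge0 : 0 <= Kq by rewrite addr_ge0 ?mulr_ge0.
  exists (Kp * Cq + Cp * Kq) => [|z w d zB wB zw]; first by rewrite addr_ge0 ?mulr_ge0.
  rewrite (_ : _ - _ = p z * (q z - q w) + (p z - p w) * q w); last by ring.
  apply: le_trans (ler_normD _ _) _; rewrite !normrM mulrDl -mulrA mulrAC.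
  by apply: lerD; apply: ler_pM; rewrite ?normr_ge0 ?(box_lipschitz_bounded pC)
    ?(box_lipschitz_bounded qC) ?pC ?qC.
Qed.

Lemma polyfun_box_bounded p : polyfun p ->
  exists K, 0 <= K /\ forall z, in_box z -> `|p z| <= K.
Proof.
case/polyfun_box_lipschitz=> C C_ge0 /box_lipschitz_bounded pK.
by exists (`|p (fun _ => 0)| + C * B); split; [rewrite addr_ge0 ?mulr_ge0 | exact: pK].
Qed.

End PolyfunBox.

Lemma sum_mul_eq0 (R : pzSemiRingType) (k : nat) (a b : 'I_k -> R) :
  (forall j, b j = 0) -> \sum_j a j * b j = 0.
Proof. by move=> b_eq0; rewrite big1 // => j _; rewrite b_eq0 mulr0. Qed.

Lemma pt_xul_in_box (R : realType) (n m l : nat) (B : R)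
    (x : 'I_n -> R) (u : 'I_m -> R) (lam : 'I_l -> R) :
  norm2 x <= B -> norm2 u <= B -> norm2 lam <= B -> in_box B (pt_xul x u lam).
Proof. by move=> xB uB lamB [[i|j]|k]; apply: le_trans (coord_le_norm2 _ _) _. Qed.

Lemma pt_xi_in_box (R : realType) (n m l : nat) (B : R) (z zp : xul_var n m l -> R) :
  in_box B z -> in_box B zp -> in_box B (pt_xi z zp).
Proof. by move=> zB zpB []. Qed.

Definition closed_loop (R : Type) (n m : nat) (f : 'I_n -> (xu_var n m -> R) -> R)
  (psi : ('I_n -> R) -> 'I_m -> R) (x : 'I_n -> R) : 'I_n -> R :=
  fun i => f i (pt_xu x (psi x)).

Lemma traj_iter (R : Type) (n m : nat) (f : 'I_n -> (xu_var n m -> R) -> R)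
  (psi : ('I_n -> R) -> 'I_m -> R) (x0 : 'I_n -> R) :
  traj f psi x0 = fun k => iter k (closed_loop f psi) x0.
Proof. by apply/funext; elim=> //= k ->. Qed.

(* [lyap x v] reads "v is an admissible Lyapunov value at x": for the certificate the
   value depends on a choice of feasible multiplier, so it is only a relation. *)
Section LyapunovRelation.
Variables (R : realType) (n : nat) (F : ('I_n -> R) -> 'I_n -> R).
Variable lyap : ('I_n -> R) -> R -> Prop.
Hypothesis lyap_exists : forall x, exists v, lyap x v.
Hypothesis lyap_ge0 : forall x v, lyap x v -> 0 <= v.
Hypothesis lyap_decrease : forall x v w, lyap x v -> lyap (F x) w -> w + sqnorm2 x <= v.

Lemma lyap_iter_decrease x v k w :
  lyap x v -> lyap (iter k.+1 F x) w -> w + sqnorm2 (iter k F x) <= v.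
Proof.
move=> xv; elim: k w => [|k IH] w; first exact: lyap_decrease.
have [u xu] := lyap_exists (iter k.+1 F x).
move=> /(lyap_decrease xu) wu; have := IH _ xu.
have := sqnorm2_ge0 (iter k F x); lra.
Qed.

Lemma lyap_attractive x0 : norm2 (iter k F x0) @[k --> \oo] --> 0.
Proof.
have [W lyapW] := choice lyap_exists.
pose a k := W (iter k F x0).
have a_step k : sqnorm2 (iter k F x0) <= a k - a k.+1.
  by have := lyap_decrease (lyapW _) (lyapW (iter k.+1 F x0)); rewrite /a; lra.
have a_cvg : cvgn a.
  apply: nonincreasing_is_cvgn; last by exists 0 => _ [k _ <-]; exact: lyap_ge0 (lyapW _).
  apply/nonincreasing_seqP => k.
  by have := a_step k; have := sqnorm2_ge0 (iter k F x0); lra.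
have gap_cvg : a k - a k.+1 @[k --> \oo] --> 0.
  by rewrite -(subrr (limn a)); apply: cvgB => //; rewrite cvg_shiftS.
have sqnorm_cvg : sqnorm2 (iter k F x0) @[k --> \oo] --> 0.
  apply: (squeeze_cvgr _ (cvg_cst 0) gap_cvg).
  by apply: nearW => k; rewrite sqnorm2_ge0 a_step.
by rewrite -sqrtr0; apply: continuous_cvg => //; exact: sqrt_continuous.
Qed.

Definition lyap_lower_estimate c0 := exists r K, [/\ 0 < r, 0 <= K &
  forall x, norm2 x < r -> exists2 v, lyap x v & c0 - K * (norm2 x + norm2 (F x)) <= v].

Definition lyap_upper_estimate c0 := exists r K, [/\ 0 < r, 0 <= K &
  forall x, norm2 x < r -> exists2 v, lyap x v & v <= c0 + K * norm2 x].

Lemma lyap_lower_bound c0 : lyap_lower_estimate c0 -> forall x v, lyap x v -> c0 <= v.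
Proof.
move=> [r [K [r_gt0 K_ge0 estimate]]] y v yv; rewrite leNgt; apply/negP => v_lt_c0.
pose x k := iter k.+1 F y.
have x_cvg : norm2 (x k) @[k --> \oo] --> 0.
  by move: (lyap_attractive y); rewrite -cvg_shiftS.
have xS_cvg : norm2 (x k.+1) @[k --> \oo] --> 0 by move: x_cvg; rewrite -cvg_shiftS.
have bound_cvg : c0 - K * (norm2 (x k) + norm2 (x k.+1)) @[k --> \oo] --> c0.
  rewrite -[X in _ --> X]subr0 -(mulr0 K) -(addr0 0).
  exact: (cvgB (cvg_cst c0) (cvgM (cvg_cst K) (cvgD x_cvg xS_cvg))).
have [k [bound_gt small]] :=
  filter_ex (filterI (cvgr_gt _ bound_cvg _ v_lt_c0) (cvgr_lt _ x_cvg _ r_gt0)).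
have [w xw w_ge] := estimate _ small.
have := lyap_iter_decrease yv xw; have := sqnorm2_ge0 (iter k F y); lra.
Qed.

Lemma lyap_fixed_origin c0 : (forall x v, lyap x v -> c0 <= v) -> lyap 0 c0 -> F 0 = 0.
Proof.
move=> lower lyap0; have [w lyapFF0] := lyap_exists (iter 2 F 0).
have c0_le := lower _ _ lyapFF0; have decrease := lyap_iter_decrease lyap0 lyapFF0.
by apply: sqnorm2_le0; lra.
Qed.

Lemma lyap_stable c0 : (forall x v, lyap x v -> c0 <= v) -> lyap_upper_estimate c0 ->
  forall e, 0 < e -> exists d, 0 < d /\
    forall x0, norm2 x0 <= d -> forall k, norm2 (iter k F x0) <= e.
Proof.
move=> lower [r [K [r_gt0 K_ge0 estimate]]] e e_gt0.
have e2_gt0 : 0 < e ^+ 2 / (K + 1) by rewrite divr_gt0 ?exprn_gt0 // ltr_wpDl.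
exists (Num.min (r / 2) (e ^+ 2 / (K + 1))); split=> [|x0 x0_le k].
  by rewrite lt_min divr_gt0.
move: x0_le; rewrite le_min => /andP[x0_le_r x0_le_e].
have [v x0v v_le] : exists2 v, lyap x0 v & v <= c0 + K * norm2 x0.
  by apply: estimate; lra.
have [w xw] := lyap_exists (iter k.+1 F x0).
have c0_le := lower _ _ xw; have decrease := lyap_iter_decrease x0v xw.
have e2_eq : (K + 1) * (e ^+ 2 / (K + 1)) = e ^+ 2.
  by rewrite mulrC divfK // lt0r_neq0 // ltr_wpDl.
by apply: norm2_le_sqr; [exact: ltW | nra].
Qed.

End LyapunovRelation.

Lemma closed_loop_GAS (R : realType) (n m : nat) (f : 'I_n -> (xu_var n m -> R) -> R)
    (psi : ('I_n -> R) -> 'I_m -> R) (lyap : ('I_n -> R) -> R -> Prop) (c0 : R) :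
  (forall x, exists v, lyap x v) -> (forall x v, lyap x v -> 0 <= v) ->
  (forall x v w, lyap x v -> lyap (closed_loop f psi x) w -> w + sqnorm2 x <= v) ->
  (forall x v, lyap x v -> c0 <= v) -> lyap_upper_estimate lyap c0 ->
  GAS f psi.
Proof.
move=> lyap_exists lyap_ge0 lyap_decrease lower upper.
split=> [x0 | e /(lyap_stable lyap_exists lyap_decrease lower upper) [d [d_gt0 stable]]].
  by rewrite traj_iter; exact: lyap_attractive.
by exists d; split=> // x0 /stable; rewrite traj_iter.
Qed.

Section SOSCertificate.
Variables (R : realType) (n m nl ng nh : nat).
Variables (f : 'I_n -> (xu_var n m -> R) -> R) (psi : ('I_n -> R) -> ('I_m -> R)).
Variables (g : 'I_ng -> (xul_var n m nl -> R) -> R).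
Variables (h : 'I_nh -> (xul_var n m nl -> R) -> R).
Variables (V : (xul_var n m nl -> R) -> R) (sigma0 : (xi_var n m nl -> R) -> R).
Variables (sigma1 sigma2 : 'I_ng -> (xi_var n m nl -> R) -> R).
Variables (p1 p2 : 'I_nh -> (xi_var n m nl -> R) -> R).
Variable (p3 : 'I_n -> (xi_var n m nl -> R) -> R).
Variables (sb0 : (xul_var n m nl -> R) -> R) (sb1 : 'I_ng -> (xul_var n m nl -> R) -> R).
Variable (pb1 : 'I_nh -> (xul_var n m nl -> R) -> R).

Definition feasible x u lam :=
  (forall i, 0 <= g i (pt_xul x u lam)) /\ (forall j, h j (pt_xul x u lam) = 0).

Hypothesis graph_feasible : forall (x : 'I_n -> R) (u : 'I_m -> R),
  u = psi x <-> exists lam : 'I_nl -> R, feasible x u lam.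
Hypotheses (sos_sigma0 : sos sigma0) (sos_sigma1 : forall i, sos (sigma1 i))
  (sos_sigma2 : forall i, sos (sigma2 i)).
Hypothesis dissipation_identity :
  forall (x : 'I_n -> R) (u : 'I_m -> R) (lam : 'I_nl -> R)
         (xp : 'I_n -> R) (up : 'I_m -> R) (lamp : 'I_nl -> R),
    let z := pt_xul x u lam in
    let zp := pt_xul xp up lamp in
    let xi := pt_xi z zp in
    V z - V zp - sqnorm2 x =
      sigma0 xi
      + \sum_(i < ng) sigma1 i xi * g i z
      + \sum_(i < ng) sigma2 i xi * g i zp
      + \sum_(j < nh) p1 j xi * h j z
      + \sum_(j < nh) p2 j xi * h j zp
      + \sum_(i < n) p3 i xi * (xp i - f i (pt_xu x u)).
Hypotheses (sos_sb0 : sos sb0) (sos_sb1 : forall i, sos (sb1 i)).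
Hypothesis positivity_identity :
  forall (x : 'I_n -> R) (u : 'I_m -> R) (lam : 'I_nl -> R),
  let z := pt_xul x u lam in
  V z = sb0 z + \sum_(i < ng) sb1 i z * g i z + \sum_(j < nh) pb1 j z * h j z.

Lemma feasible_graph x u lam : feasible x u lam -> u = psi x.
Proof. by move=> feas; apply/graph_feasible; exists lam. Qed.

Lemma feasible_multiplier x : exists lam, feasible x (psi x) lam.
Proof. exact/graph_feasible. Qed.

Lemma feasible_V_ge0 x u lam : feasible x u lam -> 0 <= V (pt_xul x u lam).
Proof.
move=> [g_ge0 h_eq0]; rewrite positivity_identity (sum_mul_eq0 _ h_eq0).
rewrite addr0 addr_ge0 ?sos_ge0 //.
by apply: sumr_ge0 => i _; rewrite mulr_ge0 ?g_ge0 ?sos_ge0.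
Qed.

Lemma feasible_dissipation x u lam xp up lamp :
  feasible x u lam -> feasible xp up lamp ->
  \sum_(i < n) p3 i (pt_xi (pt_xul x u lam) (pt_xul xp up lamp)) * (xp i - f i (pt_xu x u))
    <= V (pt_xul x u lam) - V (pt_xul xp up lamp) - sqnorm2 x.
Proof.
move=> [g_ge0 h_eq0] [gp_ge0 hp_eq0]; rewrite dissipation_identity /=.
rewrite (sum_mul_eq0 _ h_eq0) (sum_mul_eq0 _ hp_eq0).
rewrite !addr0 lerDr !addr_ge0 ?sos_ge0 //.
  by apply: sumr_ge0 => i _; rewrite mulr_ge0 ?g_ge0 ?sos_ge0.
by apply: sumr_ge0 => i _; rewrite mulr_ge0 ?gp_ge0 ?sos_ge0.
Qed.

Definition sos_lyap x v :=
  exists2 lam, feasible x (psi x) lam & V (pt_xul x (psi x) lam) = v.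

Lemma sos_lyap_exists x : exists v, sos_lyap x v.
Proof.
by have [lam feas] := feasible_multiplier x; exists (V (pt_xul x (psi x) lam)), lam.
Qed.

Lemma sos_lyap_ge0 x v : sos_lyap x v -> 0 <= v.
Proof. by move=> [lam feas <-]; exact: feasible_V_ge0. Qed.

Lemma sos_lyap_decrease x v w :
  sos_lyap x v -> sos_lyap (closed_loop f psi x) w -> w + sqnorm2 x <= v.
Proof.
move=> [lam feas <-] [lamp feasp <-]; have := feasible_dissipation feas feasp.
by rewrite big1 => [|i _]; [lra | rewrite subrr mulr0].
Qed.

Hypothesis polyfun_p3 : forall i, polyfun (p3 i).

Lemma feasible_dissipation_in_box B : 0 <= B ->
  exists2 K, 0 <= K & forall x u lam xp up lamp,
    feasible x u lam -> feasible xp up lamp ->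
    in_box B (pt_xul x u lam) -> in_box B (pt_xul xp up lamp) ->
    V (pt_xul xp up lamp) + sqnorm2 x <=
      V (pt_xul x u lam) + K * norm2 (fun i => xp i - f i (pt_xu x u)).
Proof.
move=> B_ge0.
have [Kp Kp_bound] := choice (fun i => polyfun_box_bounded B_ge0 (polyfun_p3 i)).
exists (\sum_i Kp i); first by apply: sumr_ge0 => i _; case: (Kp_bound i).
move=> x u lam xp up lamp feas feasp zB zpB.
have := feasible_dissipation feas feasp.
have /norm_sum_mul_le :
    forall i, `|p3 i (pt_xi (pt_xul x u lam) (pt_xul xp up lamp))| <= Kp i.
  by move=> i; apply: (Kp_bound i).2; exact: pt_xi_in_box.
by move=> /(_ (fun i => xp i - f i (pt_xu x u))); rewrite ler_norml => /andP[? _]; lra.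
Qed.

Definition multiplier_norms x :=
  [set t : R | exists (u : 'I_m -> R) (lam : 'I_nl -> R),
     (forall i, 0 <= g i (pt_xul x u lam)) /\
     (forall j, h j (pt_xul x u lam) = 0) /\ t = norm2 u + norm2 lam].

Section BoundedMultipliers.
Variables (r M : R).
Hypothesis r_gt0 : 0 < r.
Hypothesis multiplier_norms_bounded :
  forall x, norm2 x < r -> `|inf (multiplier_norms x)| <= M.

Lemma small_multiplier x : norm2 x < r ->
  exists2 lam, feasible x (psi x) lam & norm2 (psi x) + norm2 lam <= M + 1.
Proof.
move=> /multiplier_norms_bounded inf_le.
have norms_has_inf : has_inf (multiplier_norms x).
  split; last by exists 0 => _ [u [lam [_ [_ ->]]]]; rewrite addr_ge0 ?norm2_ge0.
  have [lam [g_ge0 h_eq0]] := feasible_multiplier x.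
  by exists (norm2 (psi x) + norm2 lam), (psi x), lam.
have [_ [u [lam [g_ge0 [h_eq0 ->]]]] t_lt] := inf_adherent ltr01 norms_has_inf.
have feas : feasible x u lam by [].
rewrite -(feasible_graph feas); exists lam => //.
by have := ler_norm (inf (multiplier_norms x)); lra.
Qed.

Variable lam0 : 'I_nl -> R.
Hypothesis feasible_lam0 : feasible 0 (psi 0) lam0.

Lemma near_origin_dissipation : exists2 K, 0 <= K & forall x, norm2 x < r ->
  exists2 lam, feasible x (psi x) lam &
    V (pt_xul 0 (psi 0) lam0)
      <= V (pt_xul x (psi x) lam) + K * norm2 (closed_loop f psi x) /\
    V (pt_xul x (psi x) lam)
      <= V (pt_xul 0 (psi 0) lam0) + K * norm2 (x - closed_loop f psi 0).
Proof.
pose B := r + M + 1 + norm2 (psi 0) + norm2 lam0.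
have M_ge0 : 0 <= M.
  by have := @multiplier_norms_bounded 0; rewrite norm2_0 => /(_ r_gt0); apply: le_trans.
have [psi0_ge0 lam0_ge0] := (norm2_ge0 (psi 0), norm2_ge0 lam0).
have r_ge0 := ltW r_gt0.
have B_ge0 : 0 <= B by rewrite /B; lra.
have [K K_ge0 dissipation] := feasible_dissipation_in_box B_ge0.
exists K => // x x_lt_r; have [lam feas small] := small_multiplier x_lt_r.
have zB : in_box B (pt_xul x (psi x) lam).
  have [psi_ge0 lam_ge0] := (norm2_ge0 (psi x), norm2_ge0 lam).
  by apply: pt_xul_in_box; rewrite /B; lra.
have z0B : in_box B (pt_xul (0 : 'I_n -> R) (psi 0) lam0).
  by apply: pt_xul_in_box; rewrite ?norm2_0 /B; lra.
exists lam => //; split.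
- have := dissipation _ _ _ _ _ _ feas feasible_lam0 zB z0B.
  have -> : (fun i => (0 : 'I_n -> R) i - f i (pt_xu x (psi x))) = - closed_loop f psi x.
    by apply/funext => i; rewrite sub0r.
  by rewrite norm2_opp; have := sqnorm2_ge0 x; lra.
- by have := dissipation _ _ _ _ _ _ feasible_lam0 feas z0B zB; rewrite sqnorm2_0 addr0.
Qed.

Lemma bounded_multiplier_lower_estimate :
  lyap_lower_estimate (closed_loop f psi) sos_lyap (V (pt_xul 0 (psi 0) lam0)).
Proof.
have [K K_ge0 near_origin] := near_origin_dissipation.
exists r, K; split=> // x /near_origin[lam feas [lower _]].
exists (V (pt_xul x (psi x) lam)); first by exists lam.
by have := mulr_ge0 K_ge0 (norm2_ge0 x); rewrite mulrDr; lra.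
Qed.

Lemma bounded_multiplier_upper_estimate : closed_loop f psi 0 = 0 ->
  lyap_upper_estimate sos_lyap (V (pt_xul 0 (psi 0) lam0)).
Proof.
move=> fixed0; have [K K_ge0 near_origin] := near_origin_dissipation.
exists r, K; split=> // x /near_origin[lam feas [_ upper]].
exists (V (pt_xul x (psi x) lam)); first by exists lam.
by rewrite fixed0 subr0 in upper.
Qed.

End BoundedMultipliers.

Section StateOnlyV.
Hypothesis polyfun_V : polyfun V.
Hypothesis V_state_only :
  forall (x : 'I_n -> R) (u u' : 'I_m -> R) (lam lam' : 'I_nl -> R),
  V (pt_xul x u lam) = V (pt_xul x u' lam').

Lemma state_only_lyap_near_origin : exists2 K, 0 <= K &
  forall x v, norm2 x <= 1 -> sos_lyap x v -> `|v - V (pt_xul 0 0 0)| <= K * norm2 x.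
Proof.
have [K K_ge0 V_lipschitz] := polyfun_box_lipschitz ler01 polyfun_V.
exists K => // x v x_le1 [lam _ <-]; rewrite (V_state_only x (psi x) 0 lam 0).
have zero_le1 : norm2 (0 : 'I_n -> R) <= 1 by rewrite norm2_0.
apply: V_lipschitz => [| |[[i|j]|k]]; rewrite ?subr0 ?subrr ?normr0 ?norm2_ge0 //.
- by apply: pt_xul_in_box; rewrite ?norm2_0.
- by apply: pt_xul_in_box; rewrite ?norm2_0.
- exact: coord_le_norm2.
Qed.

Lemma state_only_lower_estimate :
  lyap_lower_estimate (closed_loop f psi) sos_lyap (V (pt_xul 0 0 0)).
Proof.
have [K K_ge0 near_origin] := state_only_lyap_near_origin.
exists 1, K; split=> // x /ltW x_le1; have [v xv] := sos_lyap_exists x.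
exists v => //; have := near_origin _ _ x_le1 xv; rewrite ler_norml => /andP[lower _].
by have := mulr_ge0 K_ge0 (norm2_ge0 (closed_loop f psi x)); rewrite mulrDr; lra.
Qed.

Lemma state_only_upper_estimate : lyap_upper_estimate sos_lyap (V (pt_xul 0 0 0)).
Proof.
have [K K_ge0 near_origin] := state_only_lyap_near_origin.
exists 1, K; split=> // x /ltW x_le1; have [v xv] := sos_lyap_exists x.
exists v => //; have := near_origin _ _ x_le1 xv; rewrite ler_norml => /andP[_ upper].
lra.
Qed.

End StateOnlyV.

Lemma sos_certificate_attractive : glob_attractive f psi.
Proof.
move=> x0; rewrite traj_iter.
exact: lyap_attractive sos_lyap_exists sos_lyap_ge0 sos_lyap_decrease x0.
Qed.

Lemma sos_certificate_GAS_bounded_multipliers r M : 0 < r ->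
  (forall x, norm2 x < r -> `|inf (multiplier_norms x)| <= M) -> GAS f psi.
Proof.
move=> r_gt0 bounded; have [lam0 feasible_lam0] := feasible_multiplier 0.
have lower := lyap_lower_bound sos_lyap_exists sos_lyap_ge0 sos_lyap_decrease
  (bounded_multiplier_lower_estimate r_gt0 bounded feasible_lam0).
have lyap0 : sos_lyap 0 (V (pt_xul 0 (psi 0) lam0)) by exists lam0.
have fixed0 := lyap_fixed_origin sos_lyap_exists sos_lyap_decrease lower lyap0.
exact: closed_loop_GAS sos_lyap_exists sos_lyap_ge0 sos_lyap_decrease lower
  (bounded_multiplier_upper_estimate r_gt0 bounded feasible_lam0 fixed0).
Qed.

Lemma sos_certificate_GAS_state_only : polyfun V ->
  (forall (x : 'I_n -> R) (u u' : 'I_m -> R) (lam lam' : 'I_nl -> R),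
     V (pt_xul x u lam) = V (pt_xul x u' lam')) ->
  GAS f psi.
Proof.
move=> polyfun_V V_state_only.
have lower := lyap_lower_bound sos_lyap_exists sos_lyap_ge0 sos_lyap_decrease
  (state_only_lower_estimate polyfun_V V_state_only).
exact: closed_loop_GAS sos_lyap_exists sos_lyap_ge0 sos_lyap_decrease lower
  (state_only_upper_estimate polyfun_V V_state_only).
Qed.

End SOSCertificate.

Theorem theorem2 (R : realType) (n m nl ng nh : nat)
  (f : 'I_n -> (xu_var n m -> R) -> R)
  (psi : ('I_n -> R) -> ('I_m -> R))
  (g : 'I_ng -> (xul_var n m nl -> R) -> R)
  (h : 'I_nh -> (xul_var n m nl -> R) -> R)
  (V : (xul_var n m nl -> R) -> R)
  (sigma0 : (xi_var n m nl -> R) -> R)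
  (sigma1 sigma2 : 'I_ng -> (xi_var n m nl -> R) -> R)
  (p1 p2 : 'I_nh -> (xi_var n m nl -> R) -> R)
  (p3 : 'I_n -> (xi_var n m nl -> R) -> R)
  (sb0 : (xul_var n m nl -> R) -> R)
  (sb1 : 'I_ng -> (xul_var n m nl -> R) -> R)
  (pb1 : 'I_nh -> (xul_var n m nl -> R) -> R)
  (Hf : forall i, polyfun (f i))
  (Hg : forall i, polyfun (g i))
  (Hh : forall j, polyfun (h j))
  (Hgraph : forall (x : 'I_n -> R) (u : 'I_m -> R),
      u = psi x <->
      exists lam : 'I_nl -> R,
        (forall i, 0 <= g i (pt_xul x u lam)) /\
        (forall j, h j (pt_xul x u lam) = 0))
  (HV : polyfun V)
  (Hs0 : sos sigma0) (Hs1 : forall i, sos (sigma1 i)) (Hs2 : forall i, sos (sigma2 i))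
  (Hp1 : forall j, polyfun (p1 j)) (Hp2 : forall j, polyfun (p2 j))
  (Hp3 : forall i, polyfun (p3 i))
  (Hsb0 : sos sb0) (Hsb1 : forall i, sos (sb1 i)) (Hpb1 : forall j, polyfun (pb1 j))
  (Hid1 : forall (x : 'I_n -> R) (u : 'I_m -> R) (lam : 'I_nl -> R)
                 (xp : 'I_n -> R) (up : 'I_m -> R) (lamp : 'I_nl -> R),
      let z := pt_xul x u lam in
      let zp := pt_xul xp up lamp in
      let xi := pt_xi z zp in
      V z - V zp - sqnorm2 x =
        sigma0 xi
        + \sum_(i < ng) sigma1 i xi * g i z
        + \sum_(i < ng) sigma2 i xi * g i zp
        + \sum_(j < nh) p1 j xi * h j z
        + \sum_(j < nh) p2 j xi * h j zp
        + \sum_(i < n) p3 i xi * (xp i - f i (pt_xu x u)))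
  (Hid2 : forall (x : 'I_n -> R) (u : 'I_m -> R) (lam : 'I_nl -> R),
      let z := pt_xul x u lam in
      V z = sb0 z + \sum_(i < ng) sb1 i z * g i z + \sum_(j < nh) pb1 j z * h j z) :
  glob_attractive f psi /\
  ((exists r : R, 0 < r /\ exists M : R, forall x : 'I_n -> R, norm2 x < r ->
       `| inf [set t : R | exists (u : 'I_m -> R) (lam : 'I_nl -> R),
               (forall i, 0 <= g i (pt_xul x u lam)) /\
               (forall j, h j (pt_xul x u lam) = 0) /\
               t = norm2 u + norm2 lam] | <= M)
   \/
   (forall (x : 'I_n -> R) (u u' : 'I_m -> R) (lam lam' : 'I_nl -> R),
       V (pt_xul x u lam) = V (pt_xul x u' lam'))
   -> GAS f psi).
Proof.
(* Polynomiality is used only for local bounds on V and p3: the p1, p2, pb1 terms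
   vanish on the feasible set and no regularity of f, g, h is needed. *)
split; first exact: (sos_certificate_attractive Hgraph Hs0 Hs1 Hs2 Hid1 Hsb0 Hsb1 Hid2).
case=> [[r [r_gt0 [M bounded]]] | V_state_only].
- exact: (sos_certificate_GAS_bounded_multipliers Hgraph Hs0 Hs1 Hs2 Hid1 Hsb0 Hsb1 Hid2
    Hp3 r_gt0 bounded).
- exact: (sos_certificate_GAS_state_only Hgraph Hs0 Hs1 Hs2 Hid1 Hsb0 Hsb1 Hid2
    HV V_state_only).
Qed.
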